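(* For every integer $n\ge 3$, $\tilde{R}(\dot A_2^{(b)}\sqcup \dot A_2^{(r)},Q_n)=n+2$.
   Context: $A_2$ is the antichain on two vertices; $\dot A_2^{(b)}$ is it colored blue and $\dot A_2^{(r)}$ colored red. The parallel composition $\dot P_1\sqcup\dot P_2$ is the colored poset consisting of disjoint copies of $\dot P_1$ and $\dot P_2$ with every vertex of one incomparable to every vertex of the other; so $\dot A_2^{(b)}\sqcup \dot A_2^{(r)}$ is an antichain of four vertices, two blue and two red. $Q_N$ is the Boolean lattice of all subsets of an $N$-element set ordered by inclusion. In a blue/red coloring of $Q_N$, a copy of a colored poset $\dot P$ is an induced subposet isomorphic to $P$ with matching colors. The poset Erdős–Hajnal number $\tilde{R}(\dot P,Q_n)$ is the minimum $N$ such that every blue/red coloring of $Q_N$ contains a copy of $\dot P$ or a monochromatic induced copy of $Q_n$. *)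

From mathcomp Require Import all_boot.
Set Implicit Arguments. Unset Strict Implicit. Unset Printing Implicit Defensive.

Definition blue := true.
Definition red := false.

Record cposet := CPoset {
  cp_T :> finType;
  cp_le : rel cp_T;
  cp_col : cp_T -> bool }.

Definition Qle (N : nat) : rel {set 'I_N} := fun A B => A \subset B.

Definition induced_embedding (T U : finType) (leT : rel T) (leU : rel U)
  (f : T -> U) : Prop :=
  injective f /\ forall x y, leT x y = leU (f x) (f y).

Definition has_copy (P : cposet) (N : nat) (c : {set 'I_N} -> bool) : Prop :=
  exists f : P -> {set 'I_N},
    induced_embedding (@cp_le P) (@Qle N) f /\ forall x, c (f x) = cp_col x.

Definition has_mono_Q (n N : nat) (c : {set 'I_N} -> bool) : Prop :=
  exists (f : {set 'I_n} -> {set 'I_N}) (b : bool),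
    induced_embedding (@Qle n) (@Qle N) f /\ forall A, c (f A) = b.

Definition EH_arrows (P : cposet) (n N : nat) : Prop :=
  forall c : {set 'I_N} -> bool, has_copy P c \/ has_mono_Q n c.

Definition is_poset_EH_number (P : cposet) (n R : nat) : Prop :=
  EH_arrows P n R /\ forall N, N < R -> ~ EH_arrows P n N.

Definition antichain2 (col : bool) : cposet :=
  @CPoset 'I_2 (fun x y => x == y) (fun _ => col).

Definition par_le (P1 P2 : cposet) : rel (P1 + P2)%type :=
  fun x y => match x, y with
             | inl a, inl b => cp_le a b
             | inr a, inr b => cp_le a b
             | _, _ => false
             end.
Definition par_col (P1 P2 : cposet) (x : (P1 + P2)%type) : bool :=
  match x with inl a => cp_col a | inr a => cp_col a end.
Definition par_comp (P1 P2 : cposet) : cposet :=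
  @CPoset (P1 + P2)%type (@par_le P1 P2) (@par_col P1 P2).

From mathcomp Require Import all_boot zify.
From Stdlib Require Import Classical.
Set Implicit Arguments. Unset Strict Implicit. Unset Printing Implicit Defensive.

(* Lower bound: colour blue exactly the sets other than the empty and the full
   set. The two red sets are comparable, so there is no red antichain of size
   two, and a monochromatic Q_n must be blue; but a chain of n + 1 sets strictly
   between the empty and the full set needs N >= n + 2.

   Upper bound, N = n + 2: for a != b the sets containing a but not b form a
   layer L(a,b), an induced copy of Q_n, and every set of L(a,b) is
   incomparable to every set of L(b,a). Without a copy of A_2 + A_2, one of
   the two layers is therefore degenerate: its incomparable pairs are
   monochromatic. Then all sets of a degenerate layer other than its extremes
   {a} and [N]-{b} share one colour k, the same for all degenerate layers since
   they overlap. A degenerate layer whose extremes also have colour k is a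
   monochromatic Q_n. Two singletons not coloured k, together with two
   k-coloured pairs avoiding them, would form a copy of A_2 + A_2, and dually
   for complements of singletons; so two points a, b outside these at most two
   exceptions span a monochromatic layer. *)

Notation A2A2 := (par_comp (antichain2 blue) (antichain2 red)).

Lemma A2A2_le : @cp_le A2A2 =2 eq_op.
Proof. by case=> x [] y. Qed.

Section Incomparable.
Variable N : nat.
Implicit Types A B : {set 'I_N}.

Definition incomp A B := ~~ (A \subset B) && ~~ (B \subset A).

Lemma incompC A B : incomp A B = incomp B A.
Proof. by rewrite /incomp andbC. Qed.

Lemma incomp_setC A B : incomp (~: A) (~: B) = incomp A B.
Proof. by rewrite /incomp !setCS andbC. Qed.

Lemma incompW x y A B : x \in A -> x \notin B -> y \in B -> y \notin A -> incomp A B.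
Proof.
by move=> xA xB yB yA; apply/andP; split; apply/subsetPn; [exists x | exists y].
Qed.

Lemma incomp_set1 x y : x != y -> incomp [set x] [set y].
Proof. by move=> xy; apply: (incompW (set11 x) _ (set11 y)); rewrite inE // eq_sym. Qed.

Lemma incomp_set2_set1 x y a : a \notin [set x; y] -> incomp [set x; y] [set a].
Proof.
move=> a_xy; apply: (incompW (set21 x y) _ (set11 a) a_xy).
by apply: contra a_xy; rewrite !inE => /eqP->; rewrite eqxx.
Qed.

Lemma incomp_set2 x y z :
  x \notin [set y; z] -> z \notin [set x; y] -> incomp [set x; y] [set y; z].
Proof. by move=> x_yz z_xy; apply: (incompW (set21 x y) x_yz (set22 y z) z_xy). Qed.

Lemma antichain_embeddingP (T : finType) (leT : rel T) (f : T -> {set 'I_N}) :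
  leT =2 eq_op ->
  induced_embedding leT (@Qle N) f <-> forall x y, x != y -> incomp (f x) (f y).
Proof.
move=> leTE; split=> [[_ f_le] x y xy | f_inc].
  by rewrite /incomp -!/(Qle _ _) -!f_le !leTE (negbTE xy) eq_sym (negbTE xy).
split=> [x y fxy | x y].
  by have [//|/f_inc] := eqVneq x y; rewrite fxy /incomp subxx.
rewrite leTE /Qle; have [<-|/f_inc/andP[/negbTE-> _]] := eqVneq x y; by rewrite ?subxx.
Qed.

End Incomparable.

Section Copies.
Variables (N : nat) (d : {set 'I_N} -> bool).

Lemma has_copy_incomp k u1 u2 v1 v2 :
  d u1 = k -> d u2 = k -> d v1 = ~~ k -> d v2 = ~~ k ->
  incomp u1 u2 -> incomp v1 v2 ->
  incomp u1 v1 -> incomp u1 v2 -> incomp u2 v1 -> incomp u2 v2 ->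
  has_copy A2A2 d.
Proof.
wlog -> : k u1 u2 v1 v2 / k = blue.
  case: k => W; first exact: W.
  by move=> *; apply: (W true v1 v2 u1 u2); rewrite // incompC.
move=> du1 du2 dv1 dv2 u12 v12 u1v1 u1v2 u2v1 u2v2.
pose f (x : A2A2) := match x with
  | inl i => if i == ord0 then u1 else u2
  | inr i => if i == ord0 then v1 else v2 end.
exists f; split; last by case=> -[[|[|]]].
apply/(antichain_embeddingP _ A2A2_le).
by case=> -[[|[|//]] ?] [] [[|[|//]] ?] //= _; rewrite // incompC.
Qed.

Lemma has_copy_setC : has_copy A2A2 (d \o @setC _) -> has_copy A2A2 d.
Proof.
case=> f [/(antichain_embeddingP _ A2A2_le) f_inc f_col].
exists (@setC _ \o f); split=> //; apply/(antichain_embeddingP _ A2A2_le) => x y.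
by move/f_inc; rewrite /= incomp_setC.
Qed.

End Copies.

Section LowerBound.
Variables n N : nat.
Implicit Types (A S : {set 'I_N}) (X Y : {set 'I_n}) (f : {set 'I_n} -> {set 'I_N}).

Lemma embedding_proper f X Y :
  induced_embedding (@Qle n) (@Qle N) f -> X \proper Y -> f X \proper f Y.
Proof.
case=> f_inj f_le; rewrite !properEneq => /andP[XY sXY].
by rewrite -[_ \subset _]/(Qle _ _) -f_le /Qle sXY (inj_eq f_inj) XY.
Qed.

Lemma embedding_card f X :
  induced_embedding (@Qle n) (@Qle N) f -> #|f set0| + #|X| <= #|f X|.
Proof.
move=> emb; have [m] := ubnP #|X|; elim: m X => // m IH X; rewrite ltnS => Xm.
have [->|[x xX]] := set_0Vmem X; first by rewrite cards0 addn0.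
have := proper_card (embedding_proper emb (properD1 xX)).
rewrite (cardsD1 x X) xX in Xm *; have := IH (X :\ x) Xm; lia.
Qed.

Definition nontrivial S := (set0 \proper S) && (S \proper setT).

Lemma trivial_comparable S A : ~~ nontrivial S -> (S \subset A) || (A \subset S).
Proof.
rewrite /nontrivial !properE sub0set subsetT negb_and !negbK => /orP[S0|TS].
  by rewrite (subset_trans S0 (sub0set A)).
by rewrite (subset_trans (subsetT A) TS) orbT.
Qed.

Lemma nontrivial_no_copy : ~ has_copy A2A2 nontrivial.
Proof.
case=> f [/(antichain_embeddingP _ A2A2_le) f_inc f_col].
have /f_inc/andP[] : inr ord0 != inr ord_max :> A2A2 by [].
by case/orP: (trivial_comparable (f (inr ord_max)) (negbT (f_col (inr ord0)))) => ->.
Qed.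

Lemma nontrivial_no_mono : 1 < n -> N <= n.+1 -> ~ has_mono_Q n nontrivial.
Proof.
move=> n_gt1 N_le [f [b [emb f_col]]].
have /card_gt1P[i [j [_ _ ij]]] : 1 < #|'I_n| by rewrite card_ord.
have f_mid : nontrivial (f [set i]).
  apply/andP; split.
    apply: sub_proper_trans (sub0set _) (embedding_proper (X := set0) emb _).
    by rewrite proper0; apply/set0Pn; exists i; rewrite set11.
  apply: proper_sub_trans (embedding_proper (Y := setT) emb _) (subsetT _).
  by rewrite properT; apply/eqP => /setP/(_ j); rewrite !inE eq_sym (negbTE ij).
move: (f_col set0) (f_col setT); rewrite -(f_col [set i]) f_mid.
move=> /andP[/proper_card f0 _] /andP[_ /proper_card fT].
have := embedding_card setT emb; move: f0 fT; rewrite cards0 !cardsT !card_ord; lia.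
Qed.

Lemma not_EH_arrows_A2A2 : 1 < n -> N <= n.+1 -> ~ EH_arrows A2A2 n N.
Proof.
move=> n_gt1 N_le /(_ nontrivial)[]; first exact: nontrivial_no_copy.
exact: nontrivial_no_mono.
Qed.

End LowerBound.

Section Layers.
Variable N : nat.
Implicit Types (a b x : 'I_N) (S T : {set 'I_N}) (d : {set 'I_N} -> bool).

Definition layer a b := [set S : {set 'I_N} | (a \in S) && (b \notin S)].

Definition inner a b S := ([set a] \proper S) && (S \proper [set~ b]).

Definition degenerate d a b :=
  [forall u in layer a b, forall v in layer a b, incomp u v ==> (d u == d v)].

Lemma degenerateP d a b :
  reflect {in layer a b &, forall u v, incomp u v -> d u = d v} (degenerate d a b).
Proof.
apply: (iffP forall_inP) => [D u v uL vL uv | D u uL].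
  by apply/eqP; move/forall_inP/(_ v vL)/implyP: (D u uL); apply.
by apply/forall_inP => v vL; apply/implyP => /(D u v uL vL) ->.
Qed.

Lemma layer_incomp a b u v : u \in layer a b -> v \in layer b a -> incomp u v.
Proof. by rewrite !inE => /andP[au bu] /andP[bv av]; apply: (incompW au av bv bu). Qed.

Lemma layer_setC a b S : (~: S \in layer a b) = (S \in layer b a).
Proof. by rewrite !inE negbK andbC. Qed.

Lemma inner_layer a b S : inner a b S -> S \in layer a b.
Proof.
case/andP=> /proper_sub aS /proper_sub Sb.
by rewrite inE -sub1set aS; move: Sb; rewrite subsetC sub1set inE.
Qed.

Lemma layer_inner a b S :
  S \in layer a b -> S != [set a] -> S != [set~ b] -> inner a b S.
Proof.
rewrite inE => /andP[aS bS] Sa Sb; rewrite /inner !properEneq sub1set aS eq_sym Sa Sb /=.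
by apply/subsetP => z zS; rewrite !inE; apply: contraNneq bS => <-.
Qed.

Lemma innerW a b x S :
  a \in S -> x \in S -> x != a -> b \notin S -> #|S| < N.-1 -> inner a b S.
Proof.
move=> aS xS xa bS SN; apply: layer_inner; first by rewrite inE aS.
  by apply/eqP => Sa; move: xS; rewrite Sa inE (negbTE xa).
by apply/eqP => Sb; move: SN; rewrite Sb cardsC1 card_ord ltnn.
Qed.

Lemma inner_setC a b S : inner a b (~: S) = inner b a S.
Proof. by rewrite /inner properC -{1}(setCK [set a]) properC andbC. Qed.

Lemma inner_neq a b S : inner a b S -> b != a.
Proof. by move/inner_layer; rewrite inE => /andP[aS]; apply: contraNneq => ->. Qed.

Lemma degenerate_setC d a b : degenerate (d \o @setC _) a b -> degenerate d b a.
Proof.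
move/degenerateP=> D; apply/degenerateP => u v uL vL uv.
by rewrite -(setCK u) -(setCK v); apply: D; rewrite ?layer_setC ?setCK ?incomp_setC.
Qed.

Lemma degenerate_inner d a b S T :
  degenerate d a b -> inner a b S -> inner a b T -> d S = d T.
Proof.
move=> /degenerateP D.
wlog ST : S T / S \subset T.
  move=> W iS iT; have [ST|nST] := boolP (S \subset T); first exact: W.
  have [TS|nTS] := boolP (T \subset S); first by rewrite (W T S).
  by apply: D; rewrite ?inner_layer //; apply/andP.
move=> iS iT; have /inner_layer SL := iS; have /inner_layer TL := iT.
case/andP: iS => /properP[_ [i iS]]; rewrite inE => ia _.
case/andP: iT => _ /properP[_ [j]]; rewrite !inE => jb jT.
have := TL; rewrite inE => /andP[aT bT].
have iT : i \in T := subsetP ST i iS.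
pose Z := j |: (T :\ i).
have jZ : j \in Z by rewrite setU11.
have iZ : i \notin Z by rewrite !inE eqxx /= orbF; apply: contraNneq jT => <-.
have ZL : Z \in layer a b.
  by rewrite !inE aT (negbTE bT) andbT andbF orbF [a == i]eq_sym ia orbT [b == j]eq_sym jb.
have jS : j \notin S by apply: contra jT; apply: (subsetP ST).
rewrite -(D Z S ZL SL (incompW jZ jS iS iZ)).
exact: D ZL TL (incompW jZ jT iT iZ).
Qed.

End Layers.

Lemma card_avoid N (s : seq 'I_N) : N - size s <= #|~: [set x in s]|.
Proof.
rewrite -{1}(card_ord N) -(cardsC [set x in s]) cardsE.
by apply: leq_trans (leq_sub2l _ (card_size s)) _; rewrite addKn.
Qed.

Section NoCopy.
Variables (N : nat) (d : {set 'I_N} -> bool).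
Hypotheses (N_gt4 : 4 < N) (no_copy : ~ has_copy A2A2 d).
Implicit Types (a b : 'I_N) (S T : {set 'I_N}).

Lemma degenerate_or a b : degenerate d a b || degenerate d b a.
Proof.
have bichromatic a' b' : ~~ degenerate d a' b' -> exists u v,
    [/\ u \in layer a' b', v \in layer a' b', incomp u v & d v = ~~ d u].
  case/forall_inPn=> u uL /forall_inPn[v vL]; rewrite negb_imply => /andP[uv duv].
  by exists u, v; split=> //; move: duv; case: (d u); case: (d v).
apply/norP=> -[/bichromatic[u [v [uL vL uv dv]]] /bichromatic[u' [v' [uL' vL' uv' dv']]]].
apply: no_copy.
have [du'|du'] : d u' = d u \/ d u' = ~~ d u by case: (d u); case: (d u'); auto.
  apply: (has_copy_incomp (k := d u) (u1 := u) (u2 := u') (v1 := v) (v2 := v')) => //.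
  - by rewrite dv' du'.
  - exact: layer_incomp uL uL'.
  - exact: layer_incomp vL vL'.
  - exact: layer_incomp uL vL'.
  - by rewrite incompC (layer_incomp vL uL').
apply: (has_copy_incomp (k := d u) (u1 := u) (u2 := v') (v1 := v) (v2 := u')) => //.
- by rewrite dv' du' negbK.
- exact: layer_incomp uL vL'.
- exact: layer_incomp vL uL'.
- exact: layer_incomp uL uL'.
- by rewrite incompC (layer_incomp vL vL').
- by rewrite incompC.
Qed.

Lemma inner_common a b a' b' : b != a -> b' != a' -> b != a' -> b' != a ->
  exists U, inner a b U /\ inner a' b' U.
Proof.
move=> ba b'a' ba' b'a.
have /card_gt0P[e] : 0 < #|~: [set x in [:: a; b; a'; b']]|.
  by apply: leq_trans (card_avoid _); rewrite /=; lia.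
rewrite !inE !negb_or => /and4P[ea eb ea' eb'].
have U_small : #|[set a; a'; e]| < N.-1 by rewrite !cardsU !cards1; lia.
exists [set a; a'; e]; split; apply: (innerW (x := e)); rewrite // !inE ?eqxx ?orbT //.
  by rewrite !negb_or ba ba' eq_sym eb.
by rewrite !negb_or b'a b'a' eq_sym eb'.
Qed.

Lemma inner_color_link a b a' b' S T : b != a' -> b' != a ->
  degenerate d a b -> degenerate d a' b' -> inner a b S -> inner a' b' T -> d S = d T.
Proof.
move=> ba' b'a Dab Da'b' iS iT.
have [U [iU iU']] := inner_common (inner_neq iS) (inner_neq iT) ba' b'a.
by rewrite (degenerate_inner Dab iS iU) (degenerate_inner Da'b' iU' iT).
Qed.

Lemma inner_color_eq a b a' b' S T :
  degenerate d a b -> degenerate d a' b' -> inner a b S -> inner a' b' T -> d S = d T.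
Proof.
move=> Dab Da'b' iS iT.
have via (s : seq 'I_N) :
    size s <= 3 -> [/\ a \in s, b \in s, a' \in s & b' \in s] -> d S = d T.
  move=> s_small [sa sb sa' sb'].
  have /card_gt1P[x [y []]] : 1 < #|~: [set z in s]|.
    by apply: leq_trans (card_avoid s); lia.
  rewrite !inE => xs ys.
  have ne z w : z \in s -> w \notin s -> z != w.
    by move=> zs ws; apply: (contraNneq _ ws) => <-.
  wlog Dxy : x y xs ys / degenerate d x y.
    move=> W xy; case/orP: (degenerate_or x y) => D; first exact: (W x y xs ys D xy).
    by apply: (W y x) => //; rewrite eq_sym.
  move=> xy; have yx : y != x by rewrite eq_sym.
  have [U [iU _]] := inner_common yx yx yx yx.
  rewrite (inner_color_link (ne _ _ sb xs) _ Dab Dxy iS iU); last by rewrite eq_sym ne.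
  by rewrite (inner_color_link _ (ne _ _ sb' xs) Dxy Da'b' iU iT) // eq_sym ne.
have [ba'|ba'] := eqVneq b a'.
  by subst a'; apply: (via [:: a; b; b']) => //; split; rewrite !inE eqxx ?orbT.
have [b'a|b'a] := eqVneq b' a.
  by subst b'; apply: (via [:: a; b; a']) => //; split; rewrite !inE eqxx ?orbT.
exact: inner_color_link ba' b'a Dab Da'b' iS iT.
Qed.

Lemma inner_color_const :
  exists k, forall a b S, degenerate d a b -> inner a b S -> d S = k.
Proof.
have /card_gt1P[a [b [_ _ ab]]] : 1 < #|'I_N| by rewrite card_ord; lia.
wlog Dab : a b ab / degenerate d a b.
  move=> W; case/orP: (degenerate_or a b) => D; first exact: W ab D.
  by apply: (W b a); rewrite // eq_sym.
have ba : b != a by rewrite eq_sym.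
have [U [iU _]] := inner_common ba ba ba ba.
by exists (d U) => a' b' S D iS; apply: inner_color_eq D Dab iS iU.
Qed.

Variable k : bool.
Hypothesis inner_col : forall a b S, degenerate d a b -> inner a b S -> d S = k.

Lemma pair_colored x y z :
  x != y -> y != z -> z != x -> d [set y; z] = k \/ d [set z; x] = k.
Proof.
have small p q : #|[set p; q]| < N.-1 by rewrite cards2; lia.
move=> xy yz zx; case/orP: (degenerate_or x y) => D; [right | left].
all: apply: (inner_col D); apply: (innerW (x := z)); rewrite ?small // ?inE ?eqxx ?orbT //.
- by rewrite negb_or yz eq_sym xy.
- by rewrite eq_sym.
- by rewrite negb_or xy eq_sym zx.
Qed.

Lemma offcolor_singletons_le1 : #|[set a | d [set a] != k]| <= 1.
Proof.
rewrite leqNgt; apply/negP => /card_gt1P[a [a' []]]; rewrite !inE => da da' aa'.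
have /card_gt2P[x [y [z [[]]]]] : 2 < #|~: [set w in [:: a; a']]|.
  by apply: leq_trans (card_avoid _); rewrite /=; lia.
rewrite !inE !negb_or ![_ == a]eq_sym ![_ == a']eq_sym.
move=> /andP[ax a'x] /andP[ay a'y] /andP[az a'z] [xy yz zx].
have copy p q r : a != p -> a' != p -> a != q -> a' != q -> a != r -> a' != r ->
    p != q -> q != r -> r != p -> d [set p; q] = k -> d [set q; r] = k -> False.
  move=> ap a'p aq a'q ar a'r pq qr rp dpq dqr; apply: no_copy.
  have offk (e : bool) : e != k -> e = ~~ k by case: e; case: k.
  apply: (has_copy_incomp dpq dqr (offk _ da) (offk _ da')).
  - apply: incomp_set2; rewrite !inE !negb_or.
      by rewrite pq eq_sym rp.
    by rewrite rp eq_sym qr.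
  - exact: incomp_set1.
  - by apply: incomp_set2_set1; rewrite !inE negb_or ap aq.
  - by apply: incomp_set2_set1; rewrite !inE negb_or a'p a'q.
  - by apply: incomp_set2_set1; rewrite !inE negb_or aq ar.
  - by apply: incomp_set2_set1; rewrite !inE negb_or a'q a'r.
(* By [pair_colored], at most one of the three pairs inside {x, y, z} is off-colour. *)
have [Kyz|Kzx] := pair_colored xy yz zx.
  have [Kzx|Kxy] := pair_colored yz zx xy.
    exact: copy y z x ay a'y az a'z ax a'x yz zx xy Kyz Kzx.
  exact: copy x y z ax a'x ay a'y az a'z xy yz zx Kxy Kyz.
have [Kxy|Kyz] := pair_colored zx xy yz.
  exact: copy z x y az a'z ax a'x ay a'y zx xy yz Kzx Kxy.
exact: copy y z x ay a'y az a'z ax a'x yz zx xy Kyz Kzx.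
Qed.

End NoCopy.

Lemma layer_embedding n (a b : 'I_(n + 2)) : a != b ->
  exists2 f, induced_embedding (@Qle n) (@Qle (n + 2)) f & forall X, f X \in layer a b.
Proof.
move=> ab.
have cardA : n = #|~: [set a; b]|.
  by have := cardsC [set a; b]; rewrite cards2 ab card_ord; lia.
pose e i : 'I_(n + 2) := enum_val (cast_ord cardA i).
have e_inj : injective e by move=> i j /enum_val_inj /cast_ord_inj.
have eA i : (e i != a) && (e i != b).
  by have := enum_valP (cast_ord cardA i); rewrite !inE negb_or.
pose f (X : {set 'I_n}) := a |: (e @: X).
have f_le X Y : Qle X Y = Qle (f X) (f Y).
  rewrite /Qle /f; apply/idP/idP => [XY | /subsetP fXY]; first by rewrite setUS ?imsetS.
  apply/subsetP => i iX; have /fXY : e i \in f X by rewrite !inE (mem_imset _ _ e_inj) iX orbT.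
  by case/andP: (eA i) => /negbTE eia _; rewrite !inE (mem_imset _ _ e_inj) eia.
exists f.
  by split=> // X Y fXY; apply/eqP; rewrite eqEsubset -!/(Qle _ _) !f_le fXY /Qle subxx.
move=> X; rewrite inE setU11 /= !inE eq_sym (negbTE ab) /=.
by apply/imsetP => -[i _ bi]; have := eA i; rewrite -bi eqxx andbF.
Qed.

Lemma EH_arrows_A2A2 n : 2 < n -> EH_arrows A2A2 n (n + 2).
Proof.
move=> n_gt2 d; have [|no_copy] := classic (has_copy A2A2 d); [by left | right].
have N_gt4 : 4 < n + 2 by lia.
have [k inner_col] := inner_color_const N_gt4 no_copy.
have B1 := offcolor_singletons_le1 N_gt4 no_copy inner_col.
(* Complementation exchanges L(a,b) and L(b,a) and turns {a} into [N]-{a}. *)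
have C1 : #|[set a | d [set~ a] != k]| <= 1.
  have no_copyC : ~ has_copy A2A2 (d \o @setC _) by move/has_copy_setC.
  apply: (offcolor_singletons_le1 N_gt4 no_copyC).
  by move=> a b S /degenerate_setC D iS; rewrite /= (inner_col _ _ _ D) // inner_setC.
set B := [set a | _] in B1; set C := [set a | _] in C1.
have /card_gt1P[a [b []]] : 1 < #|~: (B :|: C)|.
  by have := cardsC (B :|: C); have := cardsU B C; rewrite card_ord; lia.
rewrite !inE !negb_or !negbK => /andP[/eqP da /eqP da'] /andP[/eqP db /eqP db'] ab.
wlog Dab : a b da da' db db' ab / degenerate d a b.
  move=> W; case/orP: (degenerate_or no_copy a b) => D; first exact: W D.
  by apply: (W b a) => //; rewrite eq_sym.
have [f emb fL] := layer_embedding ab.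
exists f, k; split=> // X.
have [->|Xa] := eqVneq (f X) [set a]; first exact: da.
have [->|Xb] := eqVneq (f X) [set~ b]; first exact: db'.
exact: inner_col Dab (layer_inner (fL X) Xa Xb).
Qed.

Theorem lemma12 (n : nat) : 3 <= n ->
  is_poset_EH_number (par_comp (antichain2 blue) (antichain2 red)) n (n + 2).
Proof.
move=> n_ge3; split; first exact: EH_arrows_A2A2.
by move=> N; rewrite addn2 ltnS; apply: not_EH_arrows_A2A2; lia.
Qed.
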